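(* Let $\Sigma$ be a finite alphabet, $m,n$ positive integers with $m\le n$, and $r$ an $(m,n)$-ranker. There is a sentence $\varphi_r\in\mathrm{FO}^2_{m,n}[<]$ such that for all $w\in\Sigma^\star$, $w\models\varphi_r$ iff $r(w)$ is defined.
   Context: Words are finite structures with universe $\{1,\dots,|w|\}$, unary predicates $Q_a$ ($a\in\Sigma$) marking positions carrying $a$, and the order $<$. $\mathrm{FO}^2_n[<]$ is first-order logic over this signature using only the variables $x,y$, with quantifier depth at most $n$; $\mathrm{FO}^2_{m,n}[<]$ is the set of its formulas in which every path in the parse tree has at most $m$ blocks of alternating quantifiers. Boundary positions: $\triangleright_a(w)=\min\{i:w_i=a\}$, $\triangleleft_a(w)=\max\{i:w_i=a\}$, $\triangleright_a(w,q)=\min\{i\in[q+1,|w|]:w_i=a\}$, $\triangleleft_a(w,q)=\max\{i\in[1,q-1]:w_i=a\}$ (undefined if empty); $\triangleright,\triangleleft$ are directions. An $n$-ranker is a sequence $r=(p_1,\dots,p_n)$ of boundary positions with $r(w)=p_1(w)$ if $n=1$, undefined if $(p_1,\dots,p_{n-1})(w)$ is undefined, else $p_n(w,(p_1,\dots,p_{n-1})(w))$. An $(m,n)$-ranker is an $n$-ranker whose sequence of directions consists of exactly $m$ maximal blocks of equal direction. *)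

From mathcomp Require Import all_boot.
Set Implicit Arguments. Unset Strict Implicit. Unset Printing Implicit Defensive.

(* A word over Sigma is a seq Sigma; positions are 1..size w (1-indexed as in
   the paper); [letter w i a] holds iff position i exists and carries a. *)
Definition letter (Sigma : finType) (w : seq Sigma) (i : nat) (a : Sigma) : bool :=
  (nth None (map Some w) i.-1 == Some a) && (0 < i).

Inductive var := VX | VY.

Inductive form (Sigma : Type) :=
| FTrue | FFalse
| FLetter (a : Sigma) (v : var)
| FNLetter (a : Sigma) (v : var)
| FLt (u v : var)
| FNLt (u v : var)
| FEq (u v : var)
| FNEq (u v : var)
| FAnd (f g : form Sigma)
| FOr (f g : form Sigma)
| FEx (v : var) (f : form Sigma)
| FAll (v : var) (f : form Sigma).

Arguments FTrue {Sigma}. Arguments FFalse {Sigma}.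

Definition var_eqb (u v : var) : bool :=
  match u, v with VX, VX | VY, VY => true | _, _ => false end.

Fixpoint free (Sigma : Type) (v : var) (f : form Sigma) : bool :=
  match f with
  | FTrue | FFalse => false
  | FLetter _ u | FNLetter _ u => var_eqb u v
  | FLt u1 u2 | FNLt u1 u2 | FEq u1 u2 | FNEq u1 u2 => var_eqb u1 v || var_eqb u2 v
  | FAnd g h | FOr g h => free v g || free v h
  | FEx u g | FAll u g => ~~ var_eqb u v && free v g
  end.

Definition sentence (Sigma : Type) (f : form Sigma) : bool :=
  ~~ free VX f && ~~ free VY f.

Fixpoint qdepth (Sigma : Type) (f : form Sigma) : nat :=
  match f with
  | FAnd g h | FOr g h => maxn (qdepth g) (qdepth h)
  | FEx _ g | FAll _ g => (qdepth g).+1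
  | _ => 0
  end.

(* Number of blocks of alternating quantifiers along parse-tree paths.
   [prev] is the kind of the last quantifier met on the path (None: none yet,
   Some true: existential, Some false: universal). *)
Fixpoint qblocks_aux (Sigma : Type) (prev : option bool) (f : form Sigma) : nat :=
  match f with
  | FAnd g h | FOr g h => maxn (qblocks_aux prev g) (qblocks_aux prev h)
  | FEx _ g => (prev != Some true) + qblocks_aux (Some true) g
  | FAll _ g => (prev != Some false) + qblocks_aux (Some false) g
  | _ => 0
  end.

Definition qblocks (Sigma : Type) (f : form Sigma) : nat := qblocks_aux None f.

Definition in_FO2 (Sigma : Type) (m n : nat) (f : form Sigma) : bool :=
  (qdepth f <= n) && (qblocks f <= m).

Definition lookup (v : var) (ix iy : nat) : nat :=
  match v with VX => ix | VY => iy end.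

Fixpoint sat (Sigma : finType) (w : seq Sigma) (ix iy : nat) (f : form Sigma) : Prop :=
  match f with
  | FTrue => True
  | FFalse => False
  | FLetter a v => letter w (lookup v ix iy) a
  | FNLetter a v => ~~ letter w (lookup v ix iy) a
  | FLt u v => lookup u ix iy < lookup v ix iy
  | FNLt u v => ~~ (lookup u ix iy < lookup v ix iy)
  | FEq u v => lookup u ix iy = lookup v ix iy
  | FNEq u v => lookup u ix iy <> lookup v ix iy
  | FAnd g h => sat w ix iy g /\ sat w ix iy h
  | FOr g h => sat w ix iy g \/ sat w ix iy h
  | FEx VX g => exists i, 1 <= i <= size w /\ sat w i iy g
  | FEx VY g => exists i, 1 <= i <= size w /\ sat w ix i g
  | FAll VX g => forall i, 1 <= i <= size w -> sat w i iy g
  | FAll VY g => forall i, 1 <= i <= size w -> sat w ix i g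
  end.

(* w |= phi (for a sentence the initial assignment is irrelevant). *)
Definition models (Sigma : finType) (w : seq Sigma) (f : form Sigma) : Prop :=
  sat w 0 0 f.

(* Right = the direction |> (min), Left = the direction <| (max). *)
Inductive dir := Right | Left.

Definition dir_eqb (d e : dir) : bool :=
  match d, e with Right, Right | Left, Left => true | _, _ => false end.

Definition bpos (Sigma : Type) := (dir * Sigma)%type.

Definition positions_of (Sigma : finType) (w : seq Sigma) (a : Sigma) (s : seq nat) :=
  [seq i <- s | letter w i a].

Definition bp_abs (Sigma : finType) (p : bpos Sigma) (w : seq Sigma) : option nat :=
  let s := positions_of w p.2 (iota 1 (size w)) in
  match p.1 with
  | Right => ohead s
  | Left => ohead (rev s)
  end.

Definition bp_rel (Sigma : finType) (p : bpos Sigma) (w : seq Sigma) (q : nat)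
  : option nat :=
  match p.1 with
  | Right => ohead (positions_of w p.2 (iota q.+1 (size w - q)))
  | Left => ohead (rev (positions_of w p.2 (iota 1 q.-1)))
  end.

(* r(w) for a ranker r (a nonempty sequence of boundary positions);
   None means "undefined". *)
Definition ranker_eval (Sigma : finType) (r : seq (bpos Sigma)) (w : seq Sigma)
  : option nat :=
  match r with
  | [::] => None
  | p :: rs => foldl (fun acc q => obind (bp_rel q w) acc) (bp_abs p w) rs
  end.

Fixpoint dblocks_aux (prev : dir) (s : seq dir) : nat :=
  match s with
  | [::] => 1
  | d :: s' => (~~ dir_eqb d prev) + dblocks_aux d s'
  end.

Definition dblocks (s : seq dir) : nat :=
  match s with [::] => 0 | d :: s' => dblocks_aux d s' end.

Definition is_mn_ranker (Sigma : Type) (m n : nat) (r : seq (bpos Sigma)) : bool :=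
  (size r == n) && (dblocks [seq p.1 | p <- r] == m).

From mathcomp Require Import all_boot zify.
From Stdlib Require Import Classical.
Set Implicit Arguments. Unset Strict Implicit. Unset Printing Implicit Defensive.

(* The formula is built along the ranker.  For the current position q we keep
   three formulas: "q is defined" and, with one free variable v, "v lies
   strictly (resp. weakly) beyond q in the current direction".  The next
   position, the first a-position beyond q in direction d', is described by
   existential formulas using "beyond q in direction d'".  If d' is the current
   direction this is the strict formula; otherwise it is "q is defined and v is
   not weakly beyond q", and only this negation opens a new quantifier block.
   So each step costs one quantifier and each change of direction one block. *)

Fixpoint form_neg (Sigma : Type) (f : form Sigma) : form Sigma :=
  match f with
  | FTrue => FFalse | FFalse => FTrue
  | FLetter a v => FNLetter a v | FNLetter a v => FLetter a v
  | FLt u v => FNLt Sigma u v | FNLt u v => FLt Sigma u v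
  | FEq u v => FNEq Sigma u v | FNEq u v => FEq Sigma u v
  | FAnd f g => FOr (form_neg f) (form_neg g)
  | FOr f g => FAnd (form_neg f) (form_neg g)
  | FEx v f => FAll v (form_neg f)
  | FAll v f => FEx v (form_neg f)
  end.

Lemma sat_form_neg (Sigma : finType) (w : seq Sigma) (f : form Sigma) ix iy :
  sat w ix iy (form_neg f) <-> ~ sat w ix iy f.
Proof.
elim: f ix iy => [||a v|a v|u v|u v|u v|u v|f IHf g IHg|f IHf g IHg|v f IHf|v f IHf]
  ix iy /=; rewrite ?IHf ?IHg; try tauto.
- by case: (letter _ _ _); split.
- by case: (letter _ _ _); split.
- by case: (_ < _); split.
- by case: (_ < _); split.
- by case: v; setoid_rewrite IHf; firstorder.
- case: v; setoid_rewrite IHf; split=> [[i [Hi Hn]] H|H]; try exact: Hn (H i Hi);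
    apply: NNPP => Hn; apply: H => i Hi; apply: NNPP => Hf; apply: Hn; by exists i.
Qed.

Lemma free_form_neg (Sigma : Type) (v : var) (f : form Sigma) :
  free v (form_neg f) = free v f.
Proof. by elim: f => //= [f -> g ->|f -> g ->|u f ->|u f ->]. Qed.

Lemma qdepth_form_neg (Sigma : Type) (f : form Sigma) : qdepth (form_neg f) = qdepth f.
Proof. by elim: f => //= [f -> g ->|f -> g ->|u f ->|u f ->]. Qed.

Lemma qblocks_aux_form_neg (Sigma : Type) (prev : option bool) (f : form Sigma) :
  qblocks_aux (omap negb prev) (form_neg f) = qblocks_aux prev f.
Proof.
elim: f prev => //= [f IHf g IHg|f IHf g IHg|u f IHf|u f IHf] prev; rewrite ?IHf ?IHg //.
- by rewrite -[Some false]/(omap negb (Some true)) IHf; case: prev => [[]|].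
- by rewrite -[Some true]/(omap negb (Some false)) IHf; case: prev => [[]|].
Qed.

Lemma qblocks_aux_prev (Sigma : Type) (prev prev' : option bool) (f : form Sigma) :
  qblocks_aux prev f <= (qblocks_aux prev' f).+1.
Proof.
elim: f prev prev' => //= [f IHf g IHg|f IHf g IHg|u f IHf|u f IHf] prev prev';
  try by have := IHf prev prev'; have := IHg prev prev'; lia.
all: by case: (prev != _) (prev' != _) => [] [] /=; lia.
Qed.

Definition dir_lt (d : dir) (q i : nat) : bool := if d is Right then q < i else i < q.
Definition dir_le (d : dir) (q i : nat) : bool := if d is Right then q <= i else i <= q.

Lemma dir_eqbP (d e : dir) : reflect (d = e) (dir_eqb d e).
Proof. by case: d; case: e; constructor. Qed.

Lemma dir_eqb_refl d : dir_eqb d d.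
Proof. by case: d. Qed.

Lemma dir_le_lt_trans d x j i : dir_le d x j -> dir_lt d j i -> dir_lt d x i.
Proof. by case: d => /=; lia. Qed.

Lemma dir_le_trans d x j i : dir_le d x j -> dir_le d j i -> dir_le d x i.
Proof. by case: d => /=; lia. Qed.

Lemma dir_lt_switch d d' q i : ~~ dir_eqb d' d -> dir_lt d' q i = ~~ dir_le d q i.
Proof. by case: d; case: d' => //= _; rewrite ltnNge. Qed.

Lemma letter_range (Sigma : finType) (w : seq Sigma) i a :
  letter w i a -> 0 < i <= size w.
Proof.
rewrite /letter; case: i => [|i] /andP [wi //] _ /=.
by apply: contraTT wi; rewrite -leqNgt => wi; rewrite nth_default ?size_map.
Qed.

Lemma ohead_filter_sorted (T : eqType) (e : rel T) (p : pred T) s x :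
  transitive e -> sorted e s -> ohead (filter p s) = Some x ->
  [/\ x \in s, p x & {in s, forall y, p y -> x = y \/ e x y}].
Proof.
move=> e_tr e_s; case E: (filter p s) => [|h t] //= [<-].
have /andP[ph hs] : p h && (h \in s) by rewrite -mem_filter E mem_head.
split=> // y ys py; have : y \in h :: t by rewrite -E mem_filter py.
rewrite in_cons => /predU1P [->|yt]; [by left|right].
have e_ht : sorted e (h :: t) by rewrite -E sorted_filter.
exact: (allP (order_path_min e_tr e_ht)).
Qed.

Lemma ohead_filter_has (T : eqType) (p : pred T) s :
  has p s -> ohead (filter p s) <> None.
Proof. by rewrite has_filter; case: filter. Qed.

Lemma bp_rel_Some (Sigma : finType) (w : seq Sigma) d a q x :
  bp_rel (d, a) w q = Some x ->
  [/\ letter w x a, dir_lt d q x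
    & forall u, letter w u a -> dir_lt d q u -> dir_le d x u].
Proof.
rewrite /bp_rel /positions_of; case: d => /=.
- move=> /(ohead_filter_sorted ltn_trans (iota_ltn_sorted _ _)).
  rewrite mem_iota => -[/andP [qx _] wx xmin]; split=> // u wu qu.
  have uin : u \in iota q.+1 (size w - q) by rewrite mem_iota; have := letter_range wu; lia.
  by case: (xmin u uin wu) => [->|/ltnW].
- have gtn_trans : transitive (fun i j : nat => j < i).
    by move=> j i k ij jk; apply: ltn_trans jk ij.
  have gtn_iota : sorted (fun i j : nat => j < i) (rev (iota 1 q.-1)).
    by rewrite rev_sorted iota_ltn_sorted.
  rewrite -filter_rev => /(ohead_filter_sorted gtn_trans gtn_iota).
  rewrite mem_rev mem_iota => -[/andP [x1 xq] wx xmax]; split=> [//||u wu uq]; first lia.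
  have uin : u \in rev (iota 1 q.-1) by rewrite mem_rev mem_iota; have := letter_range wu; lia.
  by case: (xmax u uin wu) => [->|/ltnW].
Qed.

Lemma bp_rel_None (Sigma : finType) (w : seq Sigma) d a q u :
  letter w u a -> dir_lt d q u -> bp_rel (d, a) w q <> None.
Proof.
rewrite /bp_rel /positions_of => wu; have := letter_range wu.
case: d => /= ur qu; rewrite -?filter_rev; apply: ohead_filter_has;
  apply/hasP; exists u; rewrite ?mem_rev ?mem_iota //; lia.
Qed.

Lemma exists_bp_rel (Sigma : finType) (w : seq Sigma) d a (o : option nat)
    (R : pred nat) (S : nat -> Prop) :
  (forall x j, dir_le d x j -> R j -> R x) ->
  (forall j, 0 < j <= size w ->
     S j <-> [/\ letter w j a, oapp (dir_lt d ^~ j) false o & R j]) ->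
  (exists j, 0 < j <= size w /\ S j) <-> oapp R false (obind (bp_rel (d, a) w) o).
Proof.
move=> R_down; case: o => [q|] /= S_def; last by split=> // -[j [/S_def-> []]].
split=> [[j [jr /(S_def j jr) [wj qj Rj]]]|].
- case E: bp_rel => [x|] /=; last by have := bp_rel_None wj qj; rewrite E.
  by have [_ _ xmin] := bp_rel_Some E; apply: R_down (xmin _ wj qj) Rj.
- case E: bp_rel => [x|] //= Rx; have [wx qx _] := bp_rel_Some E.
  by exists x; split; [apply: letter_range wx|apply/S_def; [apply: letter_range wx|]].
Qed.

Section RankerFormulas.

Variable Sigma : finType.
Implicit Types (w : seq Sigma) (a : Sigma) (p : bpos Sigma).

Definition other (v : var) : var := if v is VX then VY else VX.

Definition FDirLt (d : dir) (u v : var) : form Sigma :=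
  if d is Right then FLt Sigma u v else FLt Sigma v u.

Definition FDirLe (d : dir) (u v : var) : form Sigma :=
  FOr (FDirLt d u v) (FEq Sigma u v).

(* The three formulas attached to a position q and a direction d: q is
   defined; q is defined and v is strictly beyond q in direction d; the same,
   weakly.  The last two have v as their only free variable. *)
Record rform := RForm {
  rf_def : form Sigma;
  rf_lt : var -> form Sigma;
  rf_le : var -> form Sigma }.

Definition rform_top : rform := RForm FTrue (fun _ => FTrue) (fun _ => FTrue).

Definition cond_after (d : dir) (F : rform) (d' : dir) (u : var) : form Sigma :=
  if dir_eqb d' d then rf_lt F u else FAnd (rf_def F) (form_neg (rf_le F u)).

Definition ex_letter a (P : var -> form Sigma) (C : var -> var -> form Sigma) (v : var) :=
  FEx (other v) (FAnd (C (other v) v) (FAnd (FLetter a (other v)) (P (other v)))).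

(* With the trivial constraint, [ex_letter _ _ _ VY] is a sentence. *)
Definition rform_step (d : dir) (F : rform) p : rform :=
  let P := cond_after d F p.1 in
  RForm (ex_letter p.2 P (fun _ _ => FTrue) VY)
        (ex_letter p.2 P (FDirLt p.1)) (ex_letter p.2 P (FDirLe p.1)).

Fixpoint rform_of (d : dir) (F : rform) (rs : seq (bpos Sigma)) : rform :=
  if rs is p :: rs' then rform_of p.1 (rform_step d F p) rs' else F.

Definition ranker_form (r : seq (bpos Sigma)) : form Sigma :=
  if r is p :: _ then rf_def (rform_of p.1 rform_top r) else FFalse.

(* Absolute boundary positions are relative ones taken from the virtual
   position 0 or |w|+1. *)
Definition dir_origin (d : dir) w : nat := if d is Right then 0 else (size w).+1.

Lemma bp_abs_origin p w : bp_abs p w = bp_rel p w (dir_origin p.1 w).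
Proof. by case: p => -[] a; rewrite /bp_abs /bp_rel /= ?subn0. Qed.

Definition represents w (d : dir) (F : rform) (o : option nat) : Prop :=
  [/\ forall ix iy, sat w ix iy (rf_def F) <-> o <> None,
      forall v ix iy, 0 < lookup v ix iy <= size w ->
        sat w ix iy (rf_lt F v) <-> oapp (dir_lt d ^~ (lookup v ix iy)) false o
    & forall v ix iy, 0 < lookup v ix iy <= size w ->
        sat w ix iy (rf_le F v) <-> oapp (dir_le d ^~ (lookup v ix iy)) false o].

Lemma represents_top w d : represents w d rform_top (Some (dir_origin d w)).
Proof. by split=> // v ix iy /=; case: d => /=; split=> // _; lia. Qed.

Lemma sat_FDirLt w d u v ix iy :
  sat w ix iy (FDirLt d u v) <-> dir_lt d (lookup u ix iy) (lookup v ix iy).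
Proof. by case: d. Qed.

Lemma sat_FDirLe w d u v ix iy :
  sat w ix iy (FDirLe d u v) <-> dir_le d (lookup u ix iy) (lookup v ix iy).
Proof. by case: d => /=; split; lia. Qed.

Lemma sat_cond_after w d F o d' u ix iy :
  represents w d F o -> 0 < lookup u ix iy <= size w ->
  sat w ix iy (cond_after d F d' u) <-> oapp (dir_lt d' ^~ (lookup u ix iy)) false o.
Proof.
case=> def_sem lt_sem le_sem ur; rewrite /cond_after.
case: (boolP (dir_eqb d' d)) => [/dir_eqbP -> | dd']; first exact: lt_sem.
rewrite /= sat_form_neg def_sem le_sem //.
case: o {def_sem lt_sem le_sem} => [q|] /=; last by split=> // -[].
by rewrite (dir_lt_switch _ _ dd'); split=> [[_ /negP]|/negP].
Qed.

Lemma sat_ex_letter w d a o P C (R : rel nat) v ix iy :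
  (forall x j i, dir_le d x j -> R j i -> R x i) ->
  (forall ix iy, sat w ix iy (C (other v) v) <->
                 R (lookup (other v) ix iy) (lookup v ix iy)) ->
  (forall ix iy, 0 < lookup (other v) ix iy <= size w ->
     sat w ix iy (P (other v)) <-> oapp (dir_lt d ^~ (lookup (other v) ix iy)) false o) ->
  sat w ix iy (ex_letter a P C v) <->
  oapp (R ^~ (lookup v ix iy)) false (obind (bp_rel (d, a) w) o).
Proof.
move=> R_down C_sem P_sem.
case: v C_sem P_sem => /= C_sem P_sem; apply: exists_bp_rel => [x j|j jr];
  try exact: R_down; by rewrite /= C_sem P_sem //; split=> [[? [? ?]]|[? ? ?]].
Qed.

Lemma represents_step w d F o p :
  represents w d F o -> represents w p.1 (rform_step d F p) (obind (bp_rel p w) o).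
Proof.
case: p => d' a rep /=; split=> [ix iy|v ix iy _|v ix iy _].
- rewrite (@sat_ex_letter w d' a o _ _ (fun _ _ => true)) //; first by case: obind.
  by move=> ? ?; apply: sat_cond_after.
- apply: sat_ex_letter => [x j i|ix' iy'|ix' iy'];
    [exact: dir_le_lt_trans|exact: sat_FDirLt|exact: sat_cond_after].
- apply: sat_ex_letter => [x j i|ix' iy'|ix' iy'];
    [exact: dir_le_trans|exact: sat_FDirLe|exact: sat_cond_after].
Qed.

Lemma sat_rform_of w d F o rs ix iy :
  represents w d F o ->
  sat w ix iy (rf_def (rform_of d F rs)) <->
  foldl (fun acc q => obind (bp_rel q w) acc) o rs <> None.
Proof.
elim: rs d F o => [|p rs IH] d F o rep /=; first by case: rep.
exact/IH/represents_step.
Qed.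

Lemma sat_ranker_form w r ix iy : sat w ix iy (ranker_form r) <-> ranker_eval r w <> None.
Proof.
case: r => [|p rs]; first by split.
by rewrite /ranker_form (sat_rform_of _ _ _ (represents_top w p.1)) /= -bp_abs_origin.
Qed.

Definition fits (c k : nat) (f : form Sigma) : bool :=
  (qdepth f <= k) && (qblocks_aux (Some true) f <= c).

Definition rform_wf (c k : nat) (F : rform) : Prop :=
  [/\ sentence (rf_def F) && fits c k (rf_def F),
      forall v, ~~ free (other v) (rf_lt F v) && fits c k (rf_lt F v)
    & forall v, ~~ free (other v) (rf_le F v) && fits c k (rf_le F v)].

Lemma rform_top_wf : rform_wf 0 0 rform_top.
Proof. by []. Qed.

Lemma sentence_free v (f : form Sigma) : sentence f -> ~~ free v f.
Proof. by case: v => /andP []. Qed.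

Lemma cond_after_wf c k d F d' u :
  rform_wf c k F ->
  ~~ free (other u) (cond_after d F d' u) &&
  fits (c + ~~ dir_eqb d' d) k (cond_after d F d' u).
Proof.
case=> /andP [D_sent /andP [D_k D_c]] A_wf B_wf; rewrite /cond_after.
case: ifP => _; first by rewrite addn0 A_wf.
have /andP [B_free /andP [B_k B_c]] := B_wf u.
rewrite /fits /= free_form_neg qdepth_form_neg negb_or sentence_free //= B_free.
have := qblocks_aux_form_neg (Some false) (rf_le F u).
have := qblocks_aux_prev (Some false) (Some true) (rf_le F u).
rewrite /=; lia.
Qed.

Lemma free_ex_letter_other a P C v : ~~ free (other v) (ex_letter a P C v).
Proof. by case: v. Qed.

Lemma fits_ex_letter c k a P C v :
  (forall u, fits c k (P u)) ->
  qdepth (C (other v) v) = 0 -> qblocks_aux (Some true) (C (other v) v) = 0 ->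
  fits c k.+1 (ex_letter a P C v).
Proof. by move=> P_fits C_k C_c; rewrite /fits /= C_k C_c !max0n; apply: P_fits. Qed.

Lemma rform_step_wf c k d F p :
  rform_wf c k F -> rform_wf (c + ~~ dir_eqb p.1 d) k.+1 (rform_step d F p).
Proof.
move=> F_wf; have P_wf u := cond_after_wf d p.1 u F_wf.
have P_fits u : fits (c + ~~ dir_eqb p.1 d) k (cond_after d F p.1 u).
  by case/andP: (P_wf u).
split=> [|v|v]; rewrite fits_ex_letter ?andbT ?free_ex_letter_other //; try by case: (p.1).
by rewrite /sentence /= (andP (P_wf VX)).1.
Qed.

Lemma dblocks_aux_gt0 d s : 0 < dblocks_aux d s.
Proof. by elim: s d => //= d' s IH d; apply: ltn_addl. Qed.

Lemma rform_of_wf c k d F rs :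
  rform_wf c k F ->
  rform_wf (c + (dblocks_aux d [seq p.1 | p <- rs]).-1) (k + size rs) (rform_of d F rs).
Proof.
elim: rs c k d F => [|p rs IH] c k d F F_wf /=; first by rewrite !addn0.
have := IH _ _ p.1 _ (rform_step_wf d p F_wf).
have := dblocks_aux_gt0 p.1 [seq q.1 | q <- rs]; move: (dblocks_aux _ _) => b b_gt0.
suff -> : c + (~~ dir_eqb p.1 d + b).-1 = c + ~~ dir_eqb p.1 d + b.-1.
  by rewrite addnS -addSn.
lia.
Qed.

Lemma ranker_form_wf p rs (r := p :: rs) :
  sentence (ranker_form r) /\ in_FO2 (dblocks [seq q.1 | q <- r]) (size r) (ranker_form r).
Proof.
have [/andP [sent /andP [dep blk]] _ _] := rform_of_wf p.1 r rform_top_wf.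
split=> //; rewrite /in_FO2 dep /qblocks (leq_trans (qblocks_aux_prev _ (Some true) _)) //.
move: blk; rewrite /r /= dir_eqb_refl add0n.
by rewrite -[X in _ < X](prednK (dblocks_aux_gt0 p.1 _)) ltnS.
Qed.

End RankerFormulas.

Unset Implicit Arguments. Set Strict Implicit.

Theorem lemma4p3 (Sigma : finType) (m n : nat) (r : seq (bpos Sigma)) :
  0 < m -> m <= n -> is_mn_ranker m n r ->
  exists phi : form Sigma,
    sentence phi /\ in_FO2 m n phi /\
    forall w : seq Sigma, models w phi <-> ranker_eval r w <> None.
Proof.
move=> m_gt0 _ /andP [/eqP r_size /eqP r_blocks].
case: r r_size r_blocks => [|p rs] r_size r_blocks; first by rewrite -r_blocks in m_gt0.
have [sent fo2] := ranker_form_wf p rs; rewrite r_size r_blocks in fo2.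
by exists (ranker_form (p :: rs)); split=> //; split=> // w; exact: sat_ranker_form.
Qed.
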